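(* Let $\varrho\in C^2(\mathbb{C};\mathbb{C})$ be not $\mathbb{R}$-affine, let $K\subseteq\mathbb{C}$ be compact and $\varepsilon>0$. Then there exist $\mathbb{C}$-affine maps $\phi:\mathbb{C}\to\mathbb{C}^4$ and $\psi:\mathbb{C}^4\to\mathbb{C}$ such that at least one of the three inequalities $$\sup_{z\in K}|(\psi\circ\varrho^{\times4}\circ\phi)(z)-z\overline{z}|<\varepsilon,\quad \sup_{z\in K}|(\psi\circ\varrho^{\times4}\circ\phi)(z)-z^2|<\varepsilon,\quad \sup_{z\in K}|(\psi\circ\varrho^{\times4}\circ\phi)(z)-\overline{z}^2|<\varepsilon$$ holds.
   Context: $\varrho$ is $\mathbb{R}$-affine if it is affine as a map $\mathbb{R}^2\to\mathbb{R}^2$ under $\mathbb{C}\cong\mathbb{R}^2$. A map $\mathbb{C}^a\to\mathbb{C}^b$ is $\mathbb{C}$-affine if it has the form $z\mapsto Az+b$ with complex $A,b$. $\varrho^{\times4}$ applies $\varrho$ componentwise on $\mathbb{C}^4$. $C^2(\mathbb{C};\mathbb{C})$: continuous partial derivatives (real sense) up to order 2. *)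

From Stdlib Require Import Reals.
From Coquelicot Require Import Coquelicot.
Open Scope R_scope.

Definition dx (f : C -> R) : C -> R := fun p => Derive (fun t => f (t, snd p)) (fst p).
Definition dy (f : C -> R) : C -> R := fun p => Derive (fun t => f (fst p, t)) (snd p).

Definition C1R2 (f : C -> R) : Prop :=
  (forall p : C, continuous f p) /\
  (forall p : C, ex_derive (fun t => f (t, snd p)) (fst p)) /\
  (forall p : C, ex_derive (fun t => f (fst p, t)) (snd p)) /\
  (forall p : C, continuous (dx f) p) /\
  (forall p : C, continuous (dy f) p).

Definition C2R2 (f : C -> R) : Prop := C1R2 f /\ C1R2 (dx f) /\ C1R2 (dy f).

Definition C2C (rho : C -> C) : Prop :=
  C2R2 (fun z => Re (rho z)) /\ C2R2 (fun z => Im (rho z)).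

Definition R_affine (rho : C -> C) : Prop :=
  exists a b c d e f : R, forall x y : R,
    rho (x, y) = (a * x + b * y + e, c * x + d * y + f).

Definition compactC (K : C -> Prop) : Prop :=
  forall (I : Type) (U : I -> C -> Prop),
    (forall i, open (U i)) ->
    (forall z, K z -> exists i, U i z) ->
    exists l : list I, forall z, K z -> exists i, List.In i l /\ U i z.

Definition C4 : Type := (C * C * C * C)%type.

Definition rho4 (rho : C -> C) (w : C4) : C4 :=
  match w with (w1, w2, w3, w4) => (rho w1, rho w2, rho w3, rho w4) end.

Definition Caffine_in (phi : C -> C4) : Prop :=
  exists a1 a2 a3 a4 b1 b2 b3 b4 : C, forall z : C,
    phi z = (Cplus (Cmult a1 z) b1, Cplus (Cmult a2 z) b2,
             Cplus (Cmult a3 z) b3, Cplus (Cmult a4 z) b4).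

Definition Caffine_out (psi : C4 -> C) : Prop :=
  exists c1 c2 c3 c4 d : C, forall w1 w2 w3 w4 : C,
    psi (w1, w2, w3, w4) =
      Cplus (Cplus (Cplus (Cplus (Cmult c1 w1) (Cmult c2 w2)) (Cmult c3 w3))
                   (Cmult c4 w4)) d.

(* sup_{z in K} g z < eps  (with sup of the empty set = -infinity). *)
Definition sup_lt (K : C -> Prop) (g : C -> R) (eps : R) : Prop :=
  exists M : R, M < eps /\ forall z, K z -> g z <= M.

From Stdlib Require Import Reals Lra Classical.
From Coquelicot Require Import Coquelicot.
Open Scope R_scope.

(* At a point p where the Hessian of rho does not vanish, the symmetric second differences
   (rho (p + h v) + rho (p - h v) - 2 rho p) / h^2 converge, uniformly for v in a compact set,
   to the Hessian form Q v = x^2 A + 2 x y B + y^2 G (v = x + i y, A B G complex).  A linear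
   combination of two such second differences is psi o rho^4 o phi for C-affine phi, psi.
   Now Q z + Q (i z) = (A + G) z conj z, and when A + G = 0 also
   Q z - (i/2) Q ((1 + i) z) = (A - i B) z^2 and Q z + (i/2) Q ((1 + i) z) = (A + i B) (conj z)^2.
   Since rho is not R-affine, one of A + G, A - i B, A + i B is nonzero; dividing by it
   gives the claim. *)

Lemma MVT_abs_le (g g' : R -> R) (x y M : R) :
  (forall t, Rmin x y <= t <= Rmax x y -> is_derive g t (g' t)) ->
  (forall t, Rmin x y <= t <= Rmax x y -> Rabs (g' t) <= M) ->
  Rabs (g y - g x) <= M * Rabs (y - x).
Proof.
  intros Hd Hb.
  destruct (MVT_gen g x y g') as [c [Hc ->]].
  - intros t Ht. apply Hd. lra.
  - intros t Ht. apply continuity_pt_filterlim.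
    apply (ex_derive_continuous (K := R_AbsRing) (V := R_NormedModule)).
    eexists. exact (Hd t Ht).
  - rewrite Rabs_mult. apply Rmult_le_compat_r; [apply Rabs_pos | exact (Hb c Hc)].
Qed.

Lemma derive_0_const (g : R -> R) : (forall t, is_derive g t 0) -> forall x y, g x = g y.
Proof.
  intros Hg x y. destruct (Rtotal_order x y) as [Hxy | [-> | Hxy]]; auto.
  - apply eq_is_derive; auto.
  - symmetry. apply eq_is_derive; auto.
Qed.

Lemma segment_abs_le (x y t : R) : Rmin x y <= t <= Rmax x y -> Rabs (t - x) <= Rabs (y - x).
Proof. unfold Rmin, Rmax; destruct Rle_dec; intros; split_Rabs; lra. Qed.

Lemma taylor2_remainder_le (f : R -> R) (x0 a L eta : R) :
  (forall t, ex_derive f t) -> (forall t, ex_derive (Derive f) t) ->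
  (forall t, Rabs (t - x0) <= Rabs a -> Rabs (Derive (Derive f) t - L) <= eta) ->
  Rabs (f (x0 + a) - f x0 - a * Derive f x0 - L * a ^ 2 / 2) <= eta * a ^ 2.
Proof.
  intros Hf Hf' Hf''.
  assert (Heta : 0 <= eta).
  { apply Rle_trans with (2 := Hf'' x0 ltac:(rewrite Rminus_diag, Rabs_R0; apply Rabs_pos)).
    apply Rabs_pos. }
  set (h := fun t => f t - f x0 - (t - x0) * Derive f x0 - L * (t - x0) ^ 2 / 2).
  set (h' := fun t => Derive f t - Derive f x0 - L * (t - x0)).
  assert (Hh : forall t, is_derive h t (h' t)).
  { intros t. unfold h, h'. auto_derive; [apply Hf |].
    change (Derive (fun x => f x) t) with (Derive f t). field. }
  assert (Hh' : forall t, Rabs (t - x0) <= Rabs a -> Rabs (h' t) <= eta * Rabs a).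
  { intros t Ht.
    replace (h' t) with ((Derive f t - L * t) - (Derive f x0 - L * x0)) by (unfold h'; ring).
    apply Rle_trans with (eta * Rabs (t - x0)); [| apply Rmult_le_compat_l; lra].
    apply MVT_abs_le with (g := fun s => Derive f s - L * s)
                          (g' := fun s => Derive (Derive f) s - L).
    - intros s _. auto_derive; [apply Hf' | ].
      change (Derive (fun x => Derive f x) s) with (Derive (Derive f) s). ring.
    - intros s Hs. apply Hf''.
      exact (Rle_trans _ _ _ (segment_abs_le _ _ _ Hs) Ht). }
  replace (f (x0 + a) - f x0 - a * Derive f x0 - L * a ^ 2 / 2) with (h (x0 + a) - h x0)
    by (unfold h; field).
  replace (eta * a ^ 2) with ((eta * Rabs a) * Rabs (x0 + a - x0))
    by (replace (x0 + a - x0) with a by ring; rewrite <- pow2_abs; ring).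
  apply MVT_abs_le with (g' := h'); [intros; apply Hh |].
  intros t Ht. apply Hh'.
  rewrite <- (Rplus_minus_l x0 a). exact (segment_abs_le _ _ _ Ht).
Qed.

Lemma symmetric_segment_abs_le (x a t : R) :
  Rmin (x - a) (x + a) <= t <= Rmax (x - a) (x + a) -> Rabs (t - x) <= Rabs a.
Proof. unfold Rmin, Rmax; destruct Rle_dec; intros; split_Rabs; lra. Qed.

Definition second_diff (F : C -> R) (p v : C) : R := F (p + v)%C + F (p - v)%C - 2 * F p.

Definition hess_form (F : C -> R) (p v : C) : R :=
  fst v ^ 2 * dx (dx F) p + 2 * fst v * snd v * dx (dy F) p + snd v ^ 2 * dy (dy F) p.

Definition hess_oscillation_le (F : C -> R) (p : C) (r eta : R) : Prop :=
  forall q, Rabs (fst q - fst p) < r -> Rabs (snd q - snd p) < r ->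
    Rabs (dx (dx F) q - dx (dx F) p) <= eta /\ Rabs (dx (dy F) q - dx (dy F) p) <= eta /\
    Rabs (dy (dy F) q - dy (dy F) p) <= eta.

Lemma continuous_box (f : C -> R) (p : C) (eta : R) : continuous f p -> 0 < eta ->
  exists r, 0 < r /\ forall q, Rabs (fst q - fst p) < r -> Rabs (snd q - snd p) < r ->
    Rabs (f q - f p) < eta.
Proof.
  intros Hf Heta.
  destruct (Hf _ (locally_ball (f p) (mkposreal eta Heta))) as [r Hr].
  exists r. split; [apply cond_pos |]. intros q Hq1 Hq2. exact (Hr q (conj Hq1 Hq2)).
Qed.

Lemma hess_oscillation_small (F : C -> R) (p : C) (eta : R) : C2R2 F -> 0 < eta ->
  exists r, 0 < r /\ hess_oscillation_le F p r eta.
Proof.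
  intros [_ [[_ [_ [_ [Fxx _]]]] [_ [_ [_ [Fxy Fyy]]]]]] Heta.
  destruct (continuous_box _ p eta (Fxx p) Heta) as [r1 [Hr1 H1]].
  destruct (continuous_box _ p eta (Fxy p) Heta) as [r2 [Hr2 H2]].
  destruct (continuous_box _ p eta (Fyy p) Heta) as [r3 [Hr3 H3]].
  exists (Rmin r1 (Rmin r2 r3)). split; [repeat apply Rmin_pos; assumption |].
  intros q Hq1 Hq2.
  pose proof (Rmin_l r1 (Rmin r2 r3)). pose proof (Rmin_r r1 (Rmin r2 r3)).
  pose proof (Rmin_l r2 r3). pose proof (Rmin_r r2 r3).
  repeat split; left; [apply H1 | apply H2 | apply H3]; lra.
Qed.

Lemma mixed_term_le (F : C -> R) (p1 p2 a b eta : R) : C2R2 F ->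
  (forall t, Rabs (t - p1) <= Rabs a ->
     Rabs (dx (dy F) (t, p2) - dx (dy F) (p1, p2)) <= eta) ->
  Rabs (b * (dy F (p1 + a, p2) - dy F (p1 - a, p2)) - 2 * a * b * dx (dy F) (p1, p2))
  <= eta * (a ^ 2 + b ^ 2).
Proof.
  intros [_ [_ [_ [Fyx _]]]] Hosc.
  set (L := dx (dy F) (p1, p2)).
  assert (Hinc : Rabs ((dy F (p1 + a, p2) - (p1 + a) * L) - (dy F (p1 - a, p2) - (p1 - a) * L))
                 <= eta * Rabs ((p1 + a) - (p1 - a))).
  { apply MVT_abs_le with (g := fun t => dy F (t, p2) - t * L)
                          (g' := fun t => dx (dy F) (t, p2) - L).
    - intros t _. apply (is_derive_minus (fun s => dy F (s, p2)) (fun s => s * L)).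
      + exact (Derive_correct _ _ (Fyx (t, p2))).
      + auto_derive; [trivial | ring].
    - intros t Ht. apply Hosc, symmetric_segment_abs_le, Ht. }
  replace ((p1 + a) - (p1 - a)) with (2 * a) in Hinc by ring.
  rewrite Rabs_mult, (Rabs_right 2) in Hinc by lra.
  replace (b * (dy F (p1 + a, p2) - dy F (p1 - a, p2)) - 2 * a * b * L)
    with (b * ((dy F (p1 + a, p2) - (p1 + a) * L) - (dy F (p1 - a, p2) - (p1 - a) * L))) by ring.
  rewrite Rabs_mult.
  apply Rle_trans with (Rabs b * (eta * (2 * Rabs a))).
  - apply Rmult_le_compat_l; [apply Rabs_pos | exact Hinc].
  - rewrite <- (pow2_abs a), <- (pow2_abs b).
    assert (0 <= eta).
    { apply Rle_trans with (2 := Hosc p1 ltac:(rewrite Rminus_diag, Rabs_R0; apply Rabs_pos)).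
      apply Rabs_pos. }
    assert (0 <= eta * (Rabs a - Rabs b) ^ 2) by (apply Rmult_le_pos; [lra | apply pow2_ge_0]).
    nra.
Qed.

Lemma second_diff_hess_le (F : C -> R) (p v : C) (r eta : R) :
  C2R2 F -> hess_oscillation_le F p r eta -> Rabs (fst v) < r -> Rabs (snd v) < r ->
  Rabs (second_diff F p v - hess_form F p v) <= 3 * eta * Cmod v ^ 2.
Proof.
  intros HF Hosc Ha Hb.
  pose proof HF as [[_ [Fx [Fy _]]] [[_ [Fxx _]] [_ [_ [Fyy _]]]]].
  destruct p as [p1 p2], v as [a b]; simpl in Ha, Hb.
  rewrite Cmod2_alt; simpl.
  pose proof (Rabs_pos a) as Ha0.
  assert (Tx : forall s, Rabs s <= Rabs a ->
    Rabs (F (p1 + s, p2) - F (p1, p2) - s * dx F (p1, p2) - dx (dx F) (p1, p2) * s ^ 2 / 2)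
    <= eta * s ^ 2).
  { intros s Hs. apply (taylor2_remainder_le (fun t => F (t, p2)));
      [intros t; exact (Fx (t, p2)) | intros t; exact (Fxx (t, p2)) |].
    intros t Ht.
    refine (proj1 (Hosc (t, p2) _ _)); simpl; [lra | rewrite Rminus_diag, Rabs_R0; lra]. }
  assert (Ty : forall x s, Rabs (x - p1) < r -> Rabs s <= Rabs b ->
    Rabs (F (x, p2 + s) - F (x, p2) - s * dy F (x, p2) - dy (dy F) (p1, p2) * s ^ 2 / 2)
    <= eta * s ^ 2).
  { intros x s Hx Hs. apply (taylor2_remainder_le (fun t => F (x, t)));
      [intros t; exact (Fy (x, t)) | intros t; exact (Fyy (x, t)) |].
    intros t Ht. refine (proj2 (proj2 (Hosc (x, t) _ _))); simpl; lra. }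
  (* Taylor along the segment from p to p + (a, 0), then vertically from p + (+-a, 0);
     the mixed term collects the difference of the vertical first derivatives. *)
  assert (Hxy := mixed_term_le F p1 p2 a b eta HF
    (fun t Ht => proj1 (proj2 (Hosc (t, p2) ltac:(simpl; lra)
                                  ltac:(simpl; rewrite Rminus_diag, Rabs_R0; lra))))).
  assert (E1 := Tx a (Rle_refl _)).
  assert (E2 := Tx (- a) ltac:(rewrite Rabs_Ropp; lra)).
  assert (E3 := Ty (p1 + a) b ltac:(replace (p1 + a - p1) with a by ring; lra) (Rle_refl _)).
  assert (E4 := Ty (p1 - a) (- b) ltac:(replace (p1 - a - p1) with (- a) by ring;
                                        rewrite Rabs_Ropp; lra) ltac:(rewrite Rabs_Ropp; lra)).
  unfold second_diff, hess_form; simpl.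
  change (F ((p1, p2) + (a, b))%C) with (F (p1 + a, p2 + b)).
  change (F ((p1, p2) - (a, b))%C) with (F (p1 - a, p2 - b)).
  unfold Rminus in *.
  apply Rabs_le_between in E1, E2, E3, E4, Hxy. apply Rabs_le_between.
  lra.
Qed.

Lemma second_diff_hess_littleo (F : C -> R) (p : C) (eta : R) : C2R2 F -> 0 < eta ->
  exists del, 0 < del /\ forall v, Cmod v < del ->
    Rabs (second_diff F p v - hess_form F p v) <= eta * Cmod v ^ 2.
Proof.
  intros HF Heta.
  destruct (hess_oscillation_small F p (eta / 3) HF ltac:(lra)) as [r [Hr Hosc]].
  exists r. split; [exact Hr |]. intros v Hv.
  pose proof (Rmax_Cmod v).
  pose proof (Rmax_l (Rabs (fst v)) (Rabs (snd v))).
  pose proof (Rmax_r (Rabs (fst v)) (Rabs (snd v))).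
  replace (eta * Cmod v ^ 2) with (3 * (eta / 3) * Cmod v ^ 2) by field.
  apply second_diff_hess_le with r; [exact HF | exact Hosc | lra | lra].
Qed.

Definition hess_xx (rho : C -> C) (p : C) : C :=
  (dx (dx (fun z => Re (rho z))) p, dx (dx (fun z => Im (rho z))) p).
Definition hess_xy (rho : C -> C) (p : C) : C :=
  (dx (dy (fun z => Re (rho z))) p, dx (dy (fun z => Im (rho z))) p).
Definition hess_yy (rho : C -> C) (p : C) : C :=
  (dy (dy (fun z => Re (rho z))) p, dy (dy (fun z => Im (rho z))) p).

Definition quad_form (A B G v : C) : C :=
  (RtoC (fst v ^ 2) * A + RtoC (2 * fst v * snd v) * B + RtoC (snd v ^ 2) * G)%C.

Definition hessC (rho : C -> C) (p : C) : C -> C :=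
  quad_form (hess_xx rho p) (hess_xy rho p) (hess_yy rho p).

Definition second_diffC (rho : C -> C) (p v : C) : C := (rho (p + v) + rho (p - v) - 2 * rho p)%C.

Lemma quad_form_scale (A B G v : C) (h : R) :
  quad_form A B G (RtoC h * v) = (RtoC (h ^ 2) * quad_form A B G v)%C.
Proof.
  destruct A, B, G, v. unfold quad_form. apply injective_projections; simpl; ring.
Qed.

Lemma Cmod_le_Re_Im (w : C) : Cmod w <= Rabs (Re w) + Rabs (Im w).
Proof.
  pose proof (Rabs_pos (Re w)). pose proof (Rabs_pos (Im w)).
  unfold Cmod. rewrite <- (sqrt_pow2 (Rabs (Re w) + Rabs (Im w))) by lra.
  apply sqrt_le_1_alt. rewrite <- (pow2_abs (fst w)), <- (pow2_abs (snd w)).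
  unfold Re, Im in *. nra.
Qed.

Lemma second_diffC_sub_hessC (rho : C -> C) (p v : C) :
  (second_diffC rho p v - hessC rho p v)%C =
  (second_diff (fun z => Re (rho z)) p v - hess_form (fun z => Re (rho z)) p v,
   second_diff (fun z => Im (rho z)) p v - hess_form (fun z => Im (rho z)) p v).
Proof.
  unfold second_diffC, hessC, quad_form, hess_xx, hess_xy, hess_yy, second_diff, hess_form, Re, Im.
  apply injective_projections; simpl; ring.
Qed.

Lemma second_diffC_hessC_littleo (rho : C -> C) (p : C) (eta : R) : C2C rho -> 0 < eta ->
  exists del, 0 < del /\ forall v, Cmod v < del ->
    Cmod (second_diffC rho p v - hessC rho p v) <= eta * Cmod v ^ 2.
Proof.
  intros [HRe HIm] Heta.
  destruct (second_diff_hess_littleo _ p (eta / 2) HRe ltac:(lra)) as [d1 [Hd1 Hre]].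
  destruct (second_diff_hess_littleo _ p (eta / 2) HIm ltac:(lra)) as [d2 [Hd2 Him]].
  exists (Rmin d1 d2). split; [apply Rmin_pos; assumption |]. intros v Hv.
  specialize (Hre v (Rlt_le_trans _ _ _ Hv (Rmin_l _ _))).
  specialize (Him v (Rlt_le_trans _ _ _ Hv (Rmin_r _ _))).
  rewrite second_diffC_sub_hessC.
  eapply Rle_trans; [apply Cmod_le_Re_Im |]. simpl. lra.
Qed.

Lemma second_diffC_scaled_approx (rho : C -> C) (p : C) (M eta : R) : C2C rho -> 0 < eta ->
  exists h, 0 < h /\ forall v, Cmod v <= M ->
    Cmod (second_diffC rho p (RtoC h * v) / RtoC (h ^ 2) - hessC rho p v) <= eta.
Proof.
  intros Hrho Heta.
  set (eta' := eta / (M ^ 2 + 1)).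
  assert (HM2 : 0 <= M ^ 2) by apply pow2_ge_0.
  assert (Heta' : 0 < eta') by (apply Rdiv_lt_0_compat; lra).
  destruct (second_diffC_hessC_littleo rho p eta' Hrho Heta') as [del [Hdel Hlo]].
  pose proof (Rabs_pos M) as HM.
  set (h := del / (Rabs M + 1)).
  assert (Hh : 0 < h) by (apply Rdiv_lt_0_compat; lra).
  exists h. split; [exact Hh |]. intros v Hv.
  assert (Hv0 : 0 <= Cmod v) by apply Cmod_ge_0.
  assert (Hhv : Cmod (RtoC h * v) = h * Cmod v)
    by (rewrite Cmod_mult, Cmod_R, Rabs_pos_eq; lra).
  assert (Hsmall : Cmod (RtoC h * v) < del).
  { rewrite Hhv. apply Rle_lt_trans with (h * Rabs M).
    - apply Rmult_le_compat_l; [lra | apply Rle_trans with M; [exact Hv | apply Rle_abs]].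
    - unfold h. apply Rmult_lt_reg_r with (Rabs M + 1); [lra |].
      field_simplify; [nra | lra]. }
  assert (Hh2 : RtoC (h ^ 2) <> 0%C) by (intros E; apply RtoC_inj in E; nra).
  replace (second_diffC rho p (RtoC h * v) / RtoC (h ^ 2) - hessC rho p v)%C
    with ((second_diffC rho p (RtoC h * v) - hessC rho p (RtoC h * v)) / RtoC (h ^ 2))%C
    by (unfold hessC; rewrite quad_form_scale; field; exact Hh2).
  rewrite Cmod_div, Cmod_R, Rabs_pos_eq by (try apply pow2_ge_0; exact Hh2).
  apply Rle_trans with (eta' * Cmod (RtoC h * v) ^ 2 / h ^ 2).
  { apply Rmult_le_compat_r; [apply Rlt_le, Rinv_0_lt_compat, pow_lt, Hh | apply Hlo, Hsmall]. }
  rewrite Hhv. replace (eta' * (h * Cmod v) ^ 2 / h ^ 2) with (eta' * Cmod v ^ 2) by (field; lra).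
  apply Rle_trans with (eta' * M ^ 2).
  - apply Rmult_le_compat_l; [lra | apply pow_incr; lra].
  - unfold eta'. apply Rmult_le_reg_r with (M ^ 2 + 1); [lra |].
    field_simplify; nra.
Qed.

Lemma open_Cmod_lt (r : R) : open (fun z : C => Cmod z < r).
Proof.
  apply (open_comp Cmod (fun u => u < r)); [| apply open_lt].
  intros z _. exact (filterlim_norm (K := C_AbsRing) (V := C_NormedModule) z).
Qed.

Lemma compactC_Cmod_bounded (K : C -> Prop) : compactC K ->
  exists M, forall z, K z -> Cmod z <= M.
Proof.
  intros HK.
  destruct (HK R (fun r z => Cmod z < r) open_Cmod_lt) as [l Hl].
  { intros z _. exists (Cmod z + 1). lra. }
  exists (List.fold_right Rmax 0 l). intros z Kz.
  destruct (Hl z Kz) as [r [Hr Hz]].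
  apply Rlt_le, Rlt_le_trans with r; [exact Hz |]. clear - Hr.
  induction l as [| r' l IH]; simpl in Hr |- *; [contradiction |].
  destruct Hr as [<- | Hr]; [apply Rmax_l | exact (Rle_trans _ _ _ (IH Hr) (Rmax_r _ _))].
Qed.

Definition stencil (p a1 a2 z : C) : C4 :=
  (a1 * z + p, - a1 * z + p, a2 * z + p, - a2 * z + p)%C.

Definition stencil_weights (k mu d : C) (w : C4) : C :=
  let '(w1, w2, w3, w4) := w in (k * w1 + k * w2 + k * mu * w3 + k * mu * w4 + d)%C.

Lemma stencil_Caffine (p a1 a2 : C) : Caffine_in (stencil p a1 a2).
Proof. exists a1, (- a1)%C, a2, (- a2)%C, p, p, p, p. reflexivity. Qed.

Lemma stencil_weights_Caffine (k mu d : C) : Caffine_out (stencil_weights k mu d).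
Proof. exists k, k, (k * mu)%C, (k * mu)%C, d. reflexivity. Qed.

Lemma stencil_weights_second_diffC (rho : C -> C) (p a1 a2 k mu z : C) :
  stencil_weights k mu (- (2 * k * (1 + mu)) * rho p)%C (rho4 rho (stencil p a1 a2 z))
  = (k * (second_diffC rho p (a1 * z) + mu * second_diffC rho p (a2 * z)))%C.
Proof.
  unfold stencil, stencil_weights, second_diffC; simpl.
  replace (a1 * z + p)%C with (p + a1 * z)%C by ring.
  replace (- a1 * z + p)%C with (p - a1 * z)%C by ring.
  replace (a2 * z + p)%C with (p + a2 * z)%C by ring.
  replace (- a2 * z + p)%C with (p - a2 * z)%C by ring.
  ring.
Qed.

Lemma stencil_approximates (rho : C -> C) (K : C -> Prop) (eps : R) (p l1 l2 mu s : C)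
  (T : C -> C) : C2C rho -> compactC K -> 0 < eps -> s <> 0%C ->
  (forall z, hessC rho p (l1 * z) + mu * hessC rho p (l2 * z) = s * T z)%C ->
  exists (phi : C -> C4) (psi : C4 -> C), Caffine_in phi /\ Caffine_out psi /\
    sup_lt K (fun z => Cmod (psi (rho4 rho (phi z)) - T z)%C) eps.
Proof.
  intros Hrho HK Heps Hs Hid.
  destruct (compactC_Cmod_bounded K HK) as [M HM].
  set (c := Cmod (/ s) * (1 + Cmod mu)).
  assert (Hc : 0 <= c).
  { apply Rmult_le_pos; [apply Cmod_ge_0 | pose proof (Cmod_ge_0 mu); lra]. }
  set (eta := eps / (2 * (c + 1))).
  assert (Heta : 0 < eta) by (apply Rdiv_lt_0_compat; lra).
  destruct (second_diffC_scaled_approx rho p ((Cmod l1 + Cmod l2) * M) eta Hrho Heta)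
    as [h [Hh Happ]].
  assert (Hh2 : RtoC (h ^ 2) <> 0%C) by (intros E; apply RtoC_inj in E; nra).
  set (k := (/ s / RtoC (h ^ 2))%C).
  exists (stencil p (RtoC h * l1) (RtoC h * l2)),
    (stencil_weights k mu (- (2 * k * (1 + mu)) * rho p)%C).
  split; [apply stencil_Caffine | split; [apply stencil_weights_Caffine |]].
  exists (eps / 2). split; [lra |]. intros z Kz.
  rewrite stencil_weights_second_diffC.
  assert (Hl : forall l, Cmod l <= Cmod l1 + Cmod l2 -> Cmod (l * z) <= (Cmod l1 + Cmod l2) * M).
  { intros l Hl. rewrite Cmod_mult.
    pose proof (Cmod_ge_0 l). pose proof (Cmod_ge_0 z). pose proof (HM z Kz). nra. }
  assert (E1 := Happ (l1 * z)%C ltac:(apply Hl; pose proof (Cmod_ge_0 l2); lra)).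
  assert (E2 := Happ (l2 * z)%C ltac:(apply Hl; pose proof (Cmod_ge_0 l1); lra)).
  set (e1 := (second_diffC rho p (RtoC h * (l1 * z)) / RtoC (h ^ 2) - hessC rho p (l1 * z))%C)
    in E1.
  set (e2 := (second_diffC rho p (RtoC h * (l2 * z)) / RtoC (h ^ 2) - hessC rho p (l2 * z))%C)
    in E2.
  replace (k * (second_diffC rho p (RtoC h * l1 * z) + mu * second_diffC rho p (RtoC h * l2 * z))
           - T z)%C with (/ s * (e1 + mu * e2))%C.
  2:{ replace (T z) with (/ s * (s * T z))%C by (field; exact Hs).
      rewrite <- Hid. unfold e1, e2, k.
      replace (RtoC h * l1 * z)%C with (RtoC h * (l1 * z))%C by ring.
      replace (RtoC h * l2 * z)%C with (RtoC h * (l2 * z))%C by ring.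
      field. split; assumption. }
  rewrite Cmod_mult.
  apply Rle_trans with (Cmod (/ s) * (eta + Cmod mu * eta)).
  { apply Rmult_le_compat_l; [apply Cmod_ge_0 |].
    eapply Rle_trans; [apply Cmod_triangle |]. rewrite Cmod_mult.
    apply Rplus_le_compat; [exact E1 | apply Rmult_le_compat_l; [apply Cmod_ge_0 | exact E2]]. }
  replace (Cmod (/ s) * (eta + Cmod mu * eta)) with (c * eta) by (unfold c; ring).
  unfold eta. apply Rmult_le_reg_r with (2 * (c + 1)); [lra |].
  field_simplify; nra.
Qed.

Lemma quad_form_rotation_sum (A B G z : C) :
  (quad_form A B G z + quad_form A B G (Ci * z) = (A + G) * (z * Cconj z))%C.
Proof.
  destruct A, B, G, z. unfold quad_form. apply injective_projections; simpl; ring.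
Qed.

Lemma quad_form_traceless_z_sq (A B G z : C) : (A + G = 0)%C ->
  (quad_form A B G z + (- Ci / 2) * quad_form A B G ((1 + Ci) * z) = (A - Ci * B) * (z * z))%C.
Proof.
  destruct A as [a1 a2], B, G as [g1 g2], z. intros H. injection H as H1 H2.
  replace g1 with (- a1) by lra. replace g2 with (- a2) by lra.
  unfold quad_form. apply injective_projections; simpl; field.
Qed.

Lemma quad_form_traceless_conj_sq (A B G z : C) : (A + G = 0)%C ->
  (quad_form A B G z + (Ci / 2) * quad_form A B G ((1 + Ci) * z)
   = (A + Ci * B) * (Cconj z * Cconj z))%C.
Proof.
  destruct A as [a1 a2], B, G as [g1 g2], z. intros H. injection H as H1 H2.
  replace g1 with (- a1) by lra. replace g2 with (- a2) by lra.
  unfold quad_form. apply injective_projections; simpl; field.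
Qed.

Lemma quad_coeffs_zero (A B G : C) :
  (A + G = 0 -> A - Ci * B = 0 -> A + Ci * B = 0 -> A = 0 /\ B = 0 /\ G = 0)%C.
Proof.
  destruct A, B, G. intros H1 H2 H3.
  injection H1; injection H2; injection H3; simpl; intros.
  repeat split; apply injective_projections; simpl; lra.
Qed.

Lemma eq_affine_of_Derive_const (f : R -> R) (c : R) :
  (forall t, ex_derive f t) -> (forall t, Derive f t = c) -> forall x, f x = c * x + f 0.
Proof.
  intros Hf Hc x.
  assert (Hg : forall t, is_derive (fun s => f s - c * s) t 0).
  { intros t. replace 0 with (c - c) by ring.
    apply (is_derive_minus f (fun s => c * s)).
    - rewrite <- (Hc t). apply Derive_correct, Hf.
    - auto_derive; [trivial | ring]. }
  pose proof (derive_0_const _ Hg x 0). lra.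
Qed.

Lemma affine_of_hess_zero (F : C -> R) : C2R2 F ->
  (forall p, dx (dx F) p = 0 /\ dx (dy F) p = 0 /\ dy (dy F) p = 0) ->
  exists a b e, forall x y, F (x, y) = a * x + b * y + e.
Proof.
  intros [[_ [Fx [Fy _]]] [[_ [Fxx _]] [_ [Fyx [Fyy _]]]]] Hz.
  assert (Hy : forall x y, dy F (x, y) = dy F (0, 0)).
  { intros x y.
    rewrite (eq_affine_of_Derive_const (fun t => dy F (x, t)) 0 (fun t => Fyy (x, t))
               (fun t => proj2 (proj2 (Hz (x, t)))) y).
    rewrite (eq_affine_of_Derive_const (fun t => dy F (t, 0)) 0 (fun t => Fyx (t, 0))
               (fun t => proj1 (proj2 (Hz (t, 0)))) x).
    ring. }
  assert (Hx : forall x, dx F (x, 0) = dx F (0, 0)).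
  { intros x.
    rewrite (eq_affine_of_Derive_const (fun t => dx F (t, 0)) 0 (fun t => Fxx (t, 0))
               (fun t => proj1 (Hz (t, 0))) x).
    ring. }
  exists (dx F (0, 0)), (dy F (0, 0)), (F (0, 0)). intros x y.
  rewrite (eq_affine_of_Derive_const (fun t => F (x, t)) _ (fun t => Fy (x, t))
             (fun t => Hy x t) y).
  rewrite (eq_affine_of_Derive_const (fun t => F (t, 0)) _ (fun t => Fx (t, 0)) Hx x).
  ring.
Qed.

Lemma hessC_nonzero_somewhere (rho : C -> C) : C2C rho -> ~ R_affine rho ->
  exists p, ~ (hess_xx rho p = 0 /\ hess_xy rho p = 0 /\ hess_yy rho p = 0)%C.
Proof.
  intros [HRe HIm] Hna. apply NNPP. intros Hzero. apply Hna.
  assert (Hz : forall p, hess_xx rho p = 0%C /\ hess_xy rho p = 0%C /\ hess_yy rho p = 0%C).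
  { intros p. apply NNPP. intros Hp. apply Hzero. exists p. exact Hp. }
  destruct (affine_of_hess_zero _ HRe) as [a [b [e He]]].
  { intros p. destruct (Hz p) as [Hxx [Hxy Hyy]].
    injection Hxx; injection Hxy; injection Hyy; auto. }
  destruct (affine_of_hess_zero _ HIm) as [c [d [f Hf]]].
  { intros p. destruct (Hz p) as [Hxx [Hxy Hyy]].
    injection Hxx; injection Hxy; injection Hyy; auto. }
  exists a, b, c, d, e, f. intros x y.
  rewrite <- He, <- Hf. apply injective_projections; reflexivity.
Qed.

Theorem proposition3p2 (rho : C -> C) (Hrho : C2C rho) (Hna : ~ R_affine rho)
  (K : C -> Prop) (HK : compactC K) (eps : R) (Heps : 0 < eps) :
  exists (phi : C -> C4) (psi : C4 -> C),
    Caffine_in phi /\ Caffine_out psi /\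
    (sup_lt K (fun z => Cmod (Cminus (psi (rho4 rho (phi z))) (Cmult z (Cconj z)))) eps \/
     sup_lt K (fun z => Cmod (Cminus (psi (rho4 rho (phi z))) (Cmult z z))) eps \/
     sup_lt K (fun z => Cmod (Cminus (psi (rho4 rho (phi z))) (Cmult (Cconj z) (Cconj z)))) eps).
Proof.
  destruct (hessC_nonzero_somewhere rho Hrho Hna) as [p Hp].
  set (A := hess_xx rho p) in Hp. set (B := hess_xy rho p) in Hp. set (G := hess_yy rho p) in Hp.
  destruct (classic (A + G = 0)%C) as [HAG | HAG].
  2:{ destruct (stencil_approximates rho K eps p 1 Ci 1 (A + G) (fun z => z * Cconj z)%C
                  Hrho HK Heps HAG) as (phi & psi & ? & ? & ?).
      { intros z. rewrite !Cmult_1_l. apply quad_form_rotation_sum. }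
      exists phi, psi. tauto. }
  destruct (classic (A - Ci * B = 0)%C) as [HS | HS].
  2:{ destruct (stencil_approximates rho K eps p 1 (1 + Ci) (- Ci / 2) (A - Ci * B)
                  (fun z => z * z)%C Hrho HK Heps HS) as (phi & psi & ? & ? & ?).
      { intros z. rewrite Cmult_1_l. apply quad_form_traceless_z_sq, HAG. }
      exists phi, psi. tauto. }
  destruct (classic (A + Ci * B = 0)%C) as [HT | HT].
  - exfalso. exact (Hp (quad_coeffs_zero A B G HAG HS HT)).
  - destruct (stencil_approximates rho K eps p 1 (1 + Ci) (Ci / 2) (A + Ci * B)
                (fun z => Cconj z * Cconj z)%C Hrho HK Heps HT) as (phi & psi & ? & ? & ?).
    { intros z. rewrite Cmult_1_l. apply quad_form_traceless_conj_sq, HAG. }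
    exists phi, psi. tauto.
Qed.
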